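(* Let $q$ be a prime power, $d$ a positive divisor of $q-1$, $m=\frac{q-1}{d}$, $\omega$ a primitive root of $\mathbb{F}_q$ and $\zeta=\omega^{m}$. Let $P\in\mathbb{F}_q[T]$ be nonzero with $\deg P\le q-1$. Let $\rho_0<\rho_1<\dots<\rho_{k-1}$ be the distinct values $\operatorname{rem}(n)$ where $n$ ranges over the degrees of the monomials of $P$ with nonzero coefficient, and $\operatorname{rem}(n)$ denotes the unique element of $\{1,\dots,m\}$ congruent to $n$ mod $m$. For $\ell=0,\dots,k-1$ let $\vec v_\ell\in\mathbb{F}_q^d$ have $j$-th entry ($j=0,\dots,d-1$) equal to the coefficient of $T^{jm+\rho_\ell}$ in $P$, and let $\vec b_\ell=(b^{(\ell)}_0,\dots,b^{(\ell)}_{d-1})\in\mathbb{F}_q^d$ be the unique vector with $(\vec v_\ell)_j=\frac1d\sum_{i=0}^{d-1}\zeta^{-ij}b^{(\ell)}_i$ for all $j$. Put $S_0=\{i: b^{(0)}_i\neq0\text{ or } b^{(\ell')}_i=0\text{ for all }\ell'\}$ and $S_\ell=\{i:b^{(\ell)}_i\neq0\}$ for $\ell>0$. Then $P$ is the polynomial form of an index $d$ generalized cyclotomic mapping of $\mathbb{F}_q$ if and only if $P(0)=0$, $k\le d$, and the sets $S_0,\dots,S_{k-1}$ are pairwise disjoint with union $\{0,\dots,d-1\}$. In that case, letting $\ell(i)$ be the index with $i\in S_{\ell(i)}$, $P$ is the polynomial form of $f_\omega(\vec a,\vec r)$ with $a_i=b^{(\ell(i))}_i$ and $r_i=\rho_{\ell(i)}$.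 (The zero polynomial is the polynomial form of $f_\omega((0,\dots,0),(1,\dots,1))$.)
   Context: Let $C_i=\omega^iC$ where $C$ is the index $d$ subgroup of $\mathbb{F}_q^{\ast}$. For $\vec a\in\mathbb{F}_q^d$ and $\vec r\in\{1,\dots,m\}^d$, $f_\omega(\vec a,\vec r):\mathbb{F}_q\to\mathbb{F}_q$ maps $0\mapsto0$ and $x\mapsto a_ix^{r_i}$ for $x\in C_i$; such maps are the index $d$ generalized cyclotomic mappings. The polynomial form of a function $f:\mathbb{F}_q\to\mathbb{F}_q$ is the unique polynomial of degree at most $q-1$ that agrees with $f$ on $\mathbb{F}_q$. *)

From mathcomp Require Import all_boot all_order all_algebra all_field.
Set Implicit Arguments. Unset Strict Implicit. Unset Printing Implicit Defensive.
Import GRing.Theory.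
Local Open Scope ring_scope.

Section GCM.
Variable F : finFieldType.

Definition idx_subgroup (d : nat) : {set F} :=
  [set x : F | [exists y : F, (y != 0) && (x == y ^+ d)]].

Definition cyc_class (d : nat) (w : F) (i : nat) : {set F} :=
  [set x : F | [exists c in idx_subgroup d, x == w ^+ i * c]].

Definition gcm_map (d : nat) (w : F) (a : 'I_d -> F) (r : 'I_d -> nat) (x : F) : F :=
  if x == 0 then 0 else
  match [pick i : 'I_d | x \in cyc_class d w i] with
  | Some i => a i * x ^+ r i
  | None => 0
  end.

Definition gcm_m (d : nat) : nat := (#|F|.-1 %/ d)%N.

Definition is_gcm (d : nat) (w : F) (f : F -> F) : Prop :=
  exists (a : 'I_d -> F) (r : 'I_d -> nat),
    (forall i, (1 <= r i <= gcm_m d)%N) /\ f =1 gcm_map w a r.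

Definition poly_form (P : {poly F}) (f : F -> F) : Prop :=
  (size P <= #|F|)%N /\ forall x : F, P.[x] = f x.

Definition remm (m n : nat) : nat := if (n %% m == 0)%N then m else (n %% m)%N.

Definition rhos (m : nat) (P : {poly F}) : seq nat :=
  sort leq (undup [seq remm m n | n <- iota 0 (size P) & P`_n != 0]).

Definition vvec (d : nat) (P : {poly F}) (l : nat) (j : 'I_d) : F :=
  P`_(j * gcm_m d + nth 0%N (rhos (gcm_m d) P) l).

Definition Sset (d k : nat) (b : nat -> 'I_d -> F) (l : nat) : {set 'I_d} :=
  if l == 0%N then [set i : 'I_d | (b 0%N i != 0) || [forall l' : 'I_k, b l' i == 0]]
  else [set i : 'I_d | b l i != 0].

End GCM.

(* Write q = #|F|, m = (q - 1)/d, zeta = w^m and C_i = w^i C for the cosets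
   of the index d subgroup C of F^*.  On C_i we have x^m = zeta^i, so the
   monomial of P of degree j m + s takes the value zeta^(i j) x^s there.
   Grouping the monomials of P by residue rho_l and applying Fourier
   inversion over the d-th roots of unity, P agrees on C_i with
   P(0) + P_i(x), where P_i = sum_l b^(l)_i T^(rho_l) has degree <= m.
   - If P is the polynomial form of f_w(a, r), then P_i - a_i T^(r_i) has
     degree <= m and vanishes on {0} and on the m points of C_i, so it is
     zero: the i-th column of b is a_i at rho_l = r_i and 0 elsewhere.  Since
     every row b_l is nonzero, this yields k <= d and the partition property
     of the sets S_l.
   - Conversely, if the S_l partition {0, ..., d-1}, on C_i the component
     P_i reduces to its single monomial b^(l(i))_i T^(rho_(l(i))). *)

From mathcomp Require Import all_boot all_order all_algebra all_field.
From mathcomp Require Import zify ring.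
Import GRing.Theory.
Local Open Scope ring_scope.

Lemma remm_range (m n : nat) : (0 < m)%N -> (1 <= remm m n <= m)%N.
Proof. by move=> m_gt0; have := ltn_mod n m; rewrite m_gt0 /remm; case: eqP; lia. Qed.

Lemma remm_eq (m j r : nat) : (1 <= r <= m)%N -> remm m (j * m + r) = r.
Proof.
move=> /andP[r_ge1 r_lem]; rewrite /remm modnMDl.
have [r_ltm | r_eqm] : (r < m)%N \/ r = m by lia.
- by rewrite modn_small // eqn0Ngt r_ge1.
- by rewrite r_eqm modnn eqxx.
Qed.

Lemma remm_dec {m n : nat} : (0 < m)%N -> (0 < n)%N ->
  n = ((n.-1) %/ m * m + remm m n)%N.
Proof.
move=> m_gt0 n_gt0; have := divn_eq n.-1 m; have := ltn_mod n.-1 m.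
set q := (n.-1 %/ m)%N; set s := (n.-1 %% m)%N; rewrite m_gt0 => s_ltm n1E.
have nE : n = (q * m + s.+1)%N by lia.
by rewrite {2}nE remm_eq ?nE //; lia.
Qed.

Lemma sum_blocks {V : nmodType} (g : nat -> V) (a c : nat) :
  \sum_(t < a * c) g t = \sum_(j < a) \sum_(r < c) g (j * c + r)%N.
Proof.
elim: a => [|a IH]; first by rewrite mul0n !big_ord0.
rewrite big_ord_recr /= -IH mulSnr -!(big_mkord xpredT).
rewrite (big_cat_nat (n := a * c)) ?leq_addr //=; congr (_ + _).
rewrite (big_addn 0 (a * c + c) (a * c)) addKn big_mkord.
by apply: eq_bigr => r _; rewrite addnC.
Qed.

Lemma sum_ord_succ {V : nmodType} (g : nat -> V) (n : nat) :
  \sum_(r < n) g r.+1 = \sum_(s <- iota 1 n) g s.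
Proof.
rewrite -(addn0 1%N) iotaDl big_map -val_enum_ord big_map big_enum.
by apply: eq_bigr => r _; rewrite add1n.
Qed.

Section DiscreteFourier.
Context {R : fieldType} {d : nat} {z : R}.
Hypothesis z_prim : d.-primitive_root z.

Lemma roots_orthogonality (i i' : 'I_d) :
  \sum_(j < d) (z ^+ (i' * j))^-1 * z ^+ (i * j) = if i' == i then d%:R else 0.
Proof.
have z_neq0 : z != 0.
  by apply: contra_eq_neq (prim_expr_order z_prim) => ->; rewrite expr0n
     eqn0Ngt (prim_order_gt0 z_prim) eq_sym oner_neq0.
under eq_bigr => j _ do rewrite !exprM -exprVn -exprMn.
have [<- | i'_neq_i] := eqVneq i' i.
  rewrite (eq_bigr (fun _ => 1)) => [|j _]; first by rewrite sumr_const card_ord.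
  by rewrite mulVf ?expr1n // expf_neq0.
set u := _ * _.
have u_neq1 : u != 1.
  apply: contra_neq i'_neq_i => u1; apply: val_inj; apply/eqP.
  have := mulVKf (expf_neq0 i' z_neq0) (z ^+ i); rewrite -/u u1 mulr1 => /eqP.
  by rewrite (eq_prim_root_expr z_prim) !modn_small // eq_sym.
have u_d : u ^+ d = 1.
  by rewrite exprMn exprVn (exprAC z i' d) (exprAC z i d) (prim_expr_order z_prim)
     !expr1n invr1 mulr1.
have := subrX1 u d; rewrite u_d subrr => /esym /eqP.
by rewrite mulf_eq0 subr_eq0 (negbTE u_neq1) => /eqP.
Qed.

Lemma fourier_inversion (bb : 'I_d -> R) (i : 'I_d) :
  \sum_(j < d) ((d%:R)^-1 * \sum_(i' < d) (z ^+ (i' * j))^-1 * bb i') * z ^+ (i * j)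
  = bb i.
Proof.
under eq_bigr => j _ do rewrite -mulrA big_distrl /=.
rewrite -big_distrr /= exchange_big /=.
under eq_bigr => i' _ do
  (under eq_bigr => j _ do rewrite mulrAC; rewrite -big_distrl /= roots_orthogonality).
rewrite (bigD1 i) //= eqxx big1 => [|i' /negbTE ->]; last by rewrite mul0r.
by rewrite addr0 mulrA mulVf ?mul1r // (prim_root_natf_neq0 z_prim).
Qed.

End DiscreteFourier.

Section CyclotomicClasses.
Context {F : finFieldType} {d : nat} {w : F}.
Hypotheses (d_gt0 : (0 < d)%N) (d_dvd : (d %| #|F|.-1)%N)
  (w_prim : #|F|.-1.-primitive_root w).
Local Notation m := (gcm_m F d).
Local Notation z := (w ^+ gcm_m F d).

Lemma card_unitsE : #|F|.-1 = (d * m)%N.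
Proof. by rewrite /gcm_m mulnC divnK. Qed.

Lemma cardE : #|F| = (d * m).+1.
Proof. by rewrite -card_unitsE prednK // (ltn_trans _ (finNzRing_gt1 F)). Qed.

Lemma m_gt0 : (0 < m)%N.
Proof. by have := finNzRing_gt1 F; rewrite cardE ltnS muln_gt0 => /andP[]. Qed.

Lemma z_prim : d.-primitive_root z.
Proof.
have := exp_prim_root w_prim m.
by rewrite card_unitsE gcdnMl mulnK //; exact: m_gt0.
Qed.

Lemma unit_exp_order {x : F} : x != 0 -> x ^+ (d * m) = 1.
Proof.
move=> x_neq0; apply: (mulIf x_neq0).
rewrite mul1r -exprSr -cardE; exact: expf_card.
Qed.

Lemma w_neq0 : w != 0.
Proof.
apply: contra_eq_neq (prim_expr_order w_prim) => ->.
by rewrite card_unitsE expr0n muln_eq0 !eqn0Ngt d_gt0 m_gt0 eq_sym oner_neq0.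
Qed.

Lemma cyc_class_exp {i : nat} {x : F} :
  x \in cyc_class d w i -> x != 0 /\ x ^+ m = z ^+ i.
Proof.
rewrite inE => /existsP[c /andP[]].
rewrite inE => /existsP[y /andP[y_neq0 /eqP ->]] /eqP ->.
split; first by rewrite mulf_neq0 ?expf_neq0 // w_neq0.
by rewrite exprMn -(exprM y) unit_exp_order // mulr1 -!exprM mulnC.
Qed.

Lemma cyc_class_pow (i t : nat) : w ^+ (i + d * t) \in cyc_class d w i.
Proof.
rewrite inE; apply/existsP; exists ((w ^+ t) ^+ d); apply/andP; split.
  by rewrite inE; apply/existsP; exists (w ^+ t); rewrite eqxx expf_neq0 // w_neq0.
by rewrite exprD -exprM (mulnC t d).
Qed.

Lemma cyc_class_cover {x : F} : x != 0 -> exists i : 'I_d, x \in cyc_class d w i.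
Proof.
move=> x_neq0.
have x_unit : x ^+ #|F|.-1 = 1 by rewrite card_unitsE unit_exp_order.
have [e ->] := prim_rootP w_prim x_unit.
exists (Ordinal (ltn_pmod e d_gt0)) => /=.
by rewrite {1}(divn_eq e d) addnC mulnC; exact: cyc_class_pow.
Qed.

Lemma cyc_class_uniq {i j : 'I_d} {x : F} :
  x \in cyc_class d w i -> x \in cyc_class d w j -> i = j.
Proof.
move=> /cyc_class_exp[_ xi] /cyc_class_exp[_]; rewrite xi => /eqP.
by rewrite (eq_prim_root_expr z_prim) !modn_small // eq_sym => /eqP /val_inj.
Qed.

Lemma gcm_map_class (a : 'I_d -> F) (r : 'I_d -> nat) {i : 'I_d} {x : F} :
  x \in cyc_class d w i -> gcm_map w a r x = a i * x ^+ r i.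
Proof.
move=> x_Ci; have [x_neq0 _] := cyc_class_exp x_Ci.
rewrite /gcm_map (negbTE x_neq0).
case: pickP => [j x_Cj | /(_ i)]; last by rewrite x_Ci.
by rewrite (cyc_class_uniq x_Cj x_Ci).
Qed.

(* A polynomial of degree at most m vanishing at 0 and on a class C_i is
   zero, since {0} together with C_i has m + 1 elements. *)
Lemma vanish_on_class (Q : {poly F}) (i : 'I_d) :
  (size Q <= m.+1)%N -> root Q 0 ->
  (forall x, x \in cyc_class d w i -> root Q x) -> Q = 0.
Proof.
move=> sizeQ Q0 QCi; apply/eqP; apply: contraT => Q_neq0.
set pts := 0 :: [seq w ^+ (i + d * t) | t <- iota 0 m].
have pts_roots : all (root Q) pts.
  by rewrite /= Q0; apply/allP => _ /mapP[t _ ->]; exact/QCi/cyc_class_pow.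
have pts_uniq : uniq pts.
  rewrite /= map_inj_in_uniq ?iota_uniq ?andbT.
    by apply/mapP => -[t _] /esym /eqP; rewrite expf_eq0 (negbTE w_neq0) andbF.
  move=> t1 t2; rewrite !mem_iota !add0n => /andP[_ t1_lt] /andP[_ t2_lt] /eqP.
  rewrite (eq_prim_root_expr w_prim) card_unitsE !modn_small; first last.
  - by have := ltn_ord i; nia.
  - by have := ltn_ord i; nia.
  by move=> /eqP /addnI /eqP; rewrite eqn_pmul2l // => /eqP.
have := max_poly_roots Q_neq0 pts_roots pts_uniq.
by rewrite /= size_map size_iota ltnNge sizeQ.
Qed.

Section PolynomialForm.
Context {P : {poly F}} {b : nat -> 'I_d -> F}.
Hypothesis P_size : (size P <= #|F|)%N.
Local Notation rs := (rhos m P).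
Local Notation k := (size (rhos m P)).
Local Notation rho l := (nth 0%N (rhos m P) l).
Hypothesis b_fourier : forall (l : nat) (j : 'I_d), (l < k)%N ->
  vvec P l j = (d%:R)^-1 * \sum_(i < d) (z ^+ (i * j))^-1 * b l i.

Lemma rhos_uniq : uniq rs.
Proof. by rewrite /rhos sort_uniq undup_uniq. Qed.

Lemma rhos_mem {r : nat} : r \in rs ->
  exists2 n, (n < size P)%N & (P`_n != 0) /\ remm m n = r.
Proof.
rewrite /rhos mem_sort mem_undup => /mapP[n]; rewrite mem_filter mem_iota.
by move=> /andP[Pn_neq0 /andP[_ n_lt]] ->; exists n.
Qed.

Lemma mem_rhos {n : nat} : (n < size P)%N -> P`_n != 0 -> remm m n \in rs.
Proof.
move=> n_lt Pn_neq0; rewrite /rhos mem_sort mem_undup; apply/mapP; exists n => //.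
by rewrite mem_filter mem_iota Pn_neq0 add0n n_lt.
Qed.

Lemma rhos_range {r : nat} : r \in rs -> (1 <= r <= m)%N.
Proof. by move=> /rhos_mem[n _ [_ <-]]; exact: remm_range m_gt0. Qed.

Lemma rho_range (l : 'I_k) : (1 <= rho l <= m)%N.
Proof. exact/rhos_range/mem_nth. Qed.

Lemma coef_notin_rhos (j r : nat) : (1 <= r <= m)%N -> r \notin rs ->
  P`_(j * m + r) = 0.
Proof.
move=> r_range; apply: contraNeq => Pjr_neq0; rewrite -(@remm_eq m j r r_range).
refine (mem_rhos _ Pjr_neq0); rewrite ltnNge; apply: contra Pjr_neq0.
by move=> /leq_sizeP /(_ _ (leqnn _)) ->.
Qed.

Lemma horner_fold_class {i : 'I_d} {x : F} : x ^+ m = z ^+ i ->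
  P.[x] = P`_0 + \sum_(s <- iota 1 m) x ^+ s * \sum_(j < d) P`_(j * m + s) * z ^+ (i * j).
Proof.
move=> xm; rewrite (horner_coef_wide _ P_size) cardE big_ord_recl expr0 mulr1.
congr (_ + _); rewrite (sum_blocks (fun t => P`_t.+1 * x ^+ t.+1)).
have monomial j r : P`_(j * m + r).+1 * x ^+ (j * m + r).+1 =
    x ^+ r.+1 * (P`_(j * m + r.+1) * z ^+ (i * j)).
  by rewrite -addnS exprD exprM exprAC xm -exprM; ring.
under eq_bigr => j _ do under eq_bigr => r _ do rewrite monomial.
rewrite exchange_big /= -(sum_ord_succ (fun s => x ^+ s * _)).
by apply: eq_bigr => r _; rewrite big_distrr.
Qed.

Definition class_component (i : 'I_d) : {poly F} :=
  \sum_(l < k) b l i *: 'X^(rho l).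

(* On C_i the polynomial P agrees with P(0) + P_i: the inner sums of
   horner_fold_class are the Fourier inversions of the b_l. *)
Lemma horner_class_component {i : 'I_d} {x : F} : x ^+ m = z ^+ i ->
  P.[x] = P`_0 + (class_component i).[x].
Proof.
move=> xm; rewrite (horner_fold_class xm) horner_sum; congr (_ + _).
rewrite (bigID (mem rs)) /= [X in _ + X]big1_seq ?addr0; last first.
  move=> s /andP[s_notin]; rewrite mem_iota add1n ltnS => s_range.
  by rewrite big1 ?mulr0 // => j _; rewrite coef_notin_rhos ?mul0r.
rewrite -big_filter (perm_big rs); last first.
  apply: uniq_perm; rewrite ?filter_uniq ?iota_uniq ?rhos_uniq // => s.
  rewrite mem_filter mem_iota add1n ltnS andbC.
  by case s_rs: (s \in rs); rewrite ?andbT ?andbF // (rhos_range s_rs).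
rewrite (big_nth 0%N) big_mkord; apply: eq_bigr => l _.
rewrite hornerZ hornerXn mulrC; congr (_ * _).
rewrite -[RHS](fourier_inversion z_prim (b l) i).
by apply: eq_bigr => j _; rewrite -b_fourier.
Qed.

Lemma coef_class_component (i : 'I_d) (l : 'I_k) :
  (class_component i)`_(rho l) = b l i.
Proof.
rewrite coef_sum (bigD1 l) //= coefZ coefXn eqxx mulr1 big1 ?addr0 // => l' l'_neq_l.
rewrite coefZ coefXn nth_uniq ?rhos_uniq //.
case: eqP => [/val_inj l_eq | _]; last by rewrite mulr0.
by rewrite l_eq eqxx in l'_neq_l.
Qed.

Lemma size_class_component (i : 'I_d) : (size (class_component i) <= m.+1)%N.
Proof.
apply: (big_ind (fun p : {poly F} => size p <= m.+1)%N) => [|p q p_le q_le|l _].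
- by rewrite size_poly0.
- by apply: leq_trans (size_polyD _ _) _; rewrite geq_max p_le q_le.
- apply: leq_trans (size_scale_leq _ _) _; rewrite size_polyXn ltnS.
  by case/andP: (rho_range l).
Qed.

(* ... and vanishes at 0, as all rho_l are positive. *)
Lemma class_component0 (i : 'I_d) : (class_component i).[0] = 0.
Proof.
rewrite horner_sum big1 // => l _; rewrite hornerZ hornerXn expr0n.
by case/andP: (rho_range l); rewrite lt0n => /negbTE -> _; rewrite mulr0.
Qed.

Lemma mem_Sset (l : nat) (i : 'I_d) : (i \in Sset k b l) =
  (b l i != 0) || ((l == 0)%N && [forall l' : 'I_k, b l' i == 0]).
Proof. by rewrite /Sset; case: eqP => [->|_]; rewrite inE ?andbF ?orbF. Qed.

Lemma Sset_disjoint
    (b_uniq : forall (i : 'I_d) (l1 l2 : 'I_k), b l1 i != 0 -> b l2 i != 0 -> l1 = l2)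
    (l1 l2 : nat) : (l1 < k)%N -> (l2 < k)%N -> l1 <> l2 ->
  [disjoint Sset k b l1 & Sset k b l2].
Proof.
move=> l1_lt l2_lt l1_neq_l2; rewrite -setI_eq0; apply/eqP/setP => i.
rewrite !inE !mem_Sset; apply/negP.
case/andP=> [/orP[nz1 | /andP[/eqP l1_0 /forallP zero1]]
             /orP[nz2 | /andP[/eqP l2_0 /forallP zero2]]].
- by apply: l1_neq_l2; have := b_uniq i (Ordinal l1_lt) (Ordinal l2_lt) nz1 nz2; case.
- by move: (zero2 (Ordinal l1_lt)); rewrite (negbTE nz1).
- by move: (zero1 (Ordinal l2_lt)); rewrite (negbTE nz2).
- by apply: l1_neq_l2; rewrite l1_0 l2_0.
Qed.

(* As soon as k > 0 the S_l cover {0, ..., d-1}: a zero column lies in S_0. *)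
Lemma Sset_cover : (0 < k)%N -> \bigcup_(l < k) Sset k b l = [set: 'I_d].
Proof.
move=> k_gt0; apply/setP => i; rewrite inE; apply/bigcupP.
have [l nz | all_zero] := pickP (fun l : 'I_k => b l i != 0).
  by exists l; rewrite // mem_Sset nz.
exists (Ordinal k_gt0) => //; rewrite mem_Sset; apply/orP; right; apply/forallP => l.
by have := all_zero l; rewrite /= => /negbFE.
Qed.

(* A nonzero P has at least one residue (that of its leading term). *)
Lemma rhos_size_gt0 : P != 0 -> (0 < k)%N.
Proof.
move=> P_neq0; have lead_lt : ((size P).-1 < size P)%N by rewrite prednK ?size_poly_gt0.
have := mem_rhos lead_lt; rewrite -lead_coefE lead_coef_eq0 P_neq0.
by case: (rhos m P) => // /(_ isT).
Qed.

(* When P(0) = 0 every v_l is nonzero (rho_l occurs as a residue of a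
   degree of P), hence so is its inverse Fourier transform b_l. *)
Lemma fourier_row_nonzero (P0 : P`_0 = 0) (l : 'I_k) : exists i, b l i != 0.
Proof.
have [n n_lt [Pn_neq0 n_rem]] := rhos_mem (mem_nth 0%N (ltn_ord l)).
have n_gt0 : (0 < n)%N by rewrite lt0n; apply: contraNneq Pn_neq0 => ->; rewrite P0.
have nE := remm_dec m_gt0 n_gt0; rewrite n_rem in nE.
have j_lt : (n.-1 %/ m < d)%N.
  have : (n <= d * m)%N by rewrite -ltnS -cardE (leq_trans n_lt P_size).
  rewrite -(ltn_pmul2r m_gt0) (mulnC d); nia.
apply/existsP; apply: contraNT Pn_neq0; rewrite negb_exists => /forallP b_zero.
have := b_fourier l (Ordinal j_lt) (ltn_ord l); rewrite /vvec /= -nE => ->.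
by rewrite big1 ?mulr0 // => i _; move/negbNE/eqP: (b_zero i) => ->; rewrite mulr0.
Qed.

Section GcmPolynomial.
Context {a : 'I_d -> F} {r : 'I_d -> nat}.
Hypothesis r_range : forall i, (1 <= r i <= m)%N.
Hypothesis P_gcm : forall x, P.[x] = gcm_map w a r x.

Lemma gcm_coef0 : P`_0 = 0.
Proof. by rewrite -horner_coef0 P_gcm /gcm_map eqxx. Qed.

(* Comparing P with a_i x^(r_i) on C_i: the component of P on C_i is a
   single monomial, since a nonzero difference would have too many roots. *)
Lemma gcm_class_component (i : 'I_d) : class_component i = a i *: 'X^(r i).
Proof.
apply/eqP; rewrite -subr_eq0; apply/eqP; apply: (vanish_on_class _ i).
- apply: leq_trans (size_polyD _ _) _; rewrite geq_max size_class_component size_polyN.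
  by apply: leq_trans (size_scale_leq _ _) _; rewrite size_polyXn ltnS; case/andP: (r_range i).
- rewrite /root !hornerE class_component0 expr0n.
  by case/andP: (r_range i); rewrite lt0n => /negbTE -> _; rewrite mulr0 subrr.
- move=> x x_Ci; have [_ xm] := cyc_class_exp x_Ci.
  have := horner_class_component xm; rewrite P_gcm (gcm_map_class _ _ x_Ci).
  by rewrite gcm_coef0 add0r /root !hornerE => ->; rewrite subrr.
Qed.

Lemma gcm_fourier_coef (i : 'I_d) (l : 'I_k) :
  b l i = if rho l == r i then a i else 0.
Proof.
by rewrite -coef_class_component gcm_class_component coefZ coefXn; case: eqP;
  rewrite ?mulr1 ?mulr0.
Qed.

Lemma gcm_fourier_uniq (i : 'I_d) (l1 l2 : 'I_k) :
  b l1 i != 0 -> b l2 i != 0 -> l1 = l2.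
Proof.
rewrite !gcm_fourier_coef.
have [rho1 _|] := eqVneq (rho l1) (r i); last by rewrite eqxx.
have [rho2 _|] := eqVneq (rho l2) (r i); last by rewrite eqxx.
by apply/val_inj/eqP; rewrite -(nth_uniq 0%N _ _ rhos_uniq) //= rho1 rho2.
Qed.

(* The index map l |-> (some i with b^(l)_i != 0) is injective, so k <= d. *)
Lemma gcm_rhos_size : (k <= d)%N.
Proof.
have [g g_nz] : exists g : 'I_k -> 'I_d, forall l : 'I_k, b l (g l) != 0.
  exact: (@fin_all_exists _ (fun=> 'I_d)) (fourier_row_nonzero gcm_coef0).
have g_inj : injective g.
  move=> l1 l2 g_eq; apply: (gcm_fourier_uniq (g l1)) (g_nz l1) _.
  by rewrite g_eq g_nz.
by have := leq_card g g_inj; rewrite !card_ord.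
Qed.

Lemma gcm_criterion : P != 0 ->
  [/\ P.[0] = 0, (k <= d)%N,
      (forall l1 l2 : nat, (l1 < k)%N -> (l2 < k)%N -> l1 <> l2 ->
         [disjoint Sset k b l1 & Sset k b l2])
    & (\bigcup_(l < k) Sset k b l) = [set: 'I_d]].
Proof.
move=> P_neq0; split.
- by rewrite horner_coef0 gcm_coef0.
- exact: gcm_rhos_size.
- exact/Sset_disjoint/gcm_fourier_uniq.
- exact/Sset_cover/rhos_size_gt0.
Qed.

End GcmPolynomial.

Lemma gcm_explicit_form (P0 : P.[0] = 0)
    (S_disj : forall l1 l2 : nat, (l1 < k)%N -> (l2 < k)%N -> l1 <> l2 ->
       [disjoint Sset k b l1 & Sset k b l2])
    (lf : 'I_d -> nat) (lf_S : forall i, (lf i < k)%N /\ i \in Sset k b (lf i)) :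
  poly_form P (gcm_map w (fun i => b (lf i) i) (fun i => rho (lf i))).
Proof.
split=> // x; have [->|x_neq0] := eqVneq x 0; first by rewrite P0 /gcm_map eqxx.
have [i x_Ci] := cyc_class_cover x_neq0; have [_ xm] := cyc_class_exp x_Ci.
rewrite (gcm_map_class _ _ x_Ci) (horner_class_component xm) -horner_coef0 P0 add0r.
have [lf_lt i_S] := lf_S i.
rewrite horner_sum (bigD1 (Ordinal lf_lt)) //= big1 ?addr0 ?hornerZ ?hornerXn //.
move=> l l_neq; apply/eqP; rewrite hornerZ mulf_eq0; apply/orP; left.
apply: contraT => b_nz; have i_Sl : i \in Sset k b l by rewrite mem_Sset b_nz.
have lf_neq : lf i <> l by move=> e; rewrite -val_eqE /= e eqxx in l_neq.
have := S_disj _ _ lf_lt (ltn_ord l) lf_neq; rewrite -setI_eq0 => /eqP/setP/(_ i).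
by rewrite !inE i_S i_Sl.
Qed.

End PolynomialForm.
End CyclotomicClasses.

Theorem theorem2 (F : finFieldType) (d : nat) (w : F) (P : {poly F})
    (b : nat -> 'I_d -> F) :
  (0 < d)%N -> (d %| #|F|.-1)%N ->
  #|F|.-1.-primitive_root w ->
  P != 0 -> (size P <= #|F|)%N ->
  (forall (l : nat) (j : 'I_d), (l < size (rhos (gcm_m F d) P))%N ->
     vvec P l j = (d%:R)^-1 *
       \sum_(i < d) ((w ^+ gcm_m F d) ^+ (i * j))^-1 * b l i) ->
  let k := size (rhos (gcm_m F d) P) in
  let rho := fun l : nat => nth 0%N (rhos (gcm_m F d) P) l in
  ((exists2 f : F -> F, is_gcm d w f & poly_form P f) <->
     [/\ P.[0] = 0, (k <= d)%N,
         (forall l1 l2 : nat, (l1 < k)%N -> (l2 < k)%N -> l1 <> l2 ->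
            [disjoint Sset k b l1 & Sset k b l2])
       & (\bigcup_(l < k) Sset k b l) = [set: 'I_d]])
  /\
  ([/\ P.[0] = 0, (k <= d)%N,
       (forall l1 l2 : nat, (l1 < k)%N -> (l2 < k)%N -> l1 <> l2 ->
          [disjoint Sset k b l1 & Sset k b l2])
     & (\bigcup_(l < k) Sset k b l) = [set: 'I_d]] ->
   forall lf : 'I_d -> nat,
     (forall i, (lf i < k)%N /\ i \in Sset k b (lf i)) ->
     poly_form P (gcm_map w (fun i => b (lf i) i) (fun i => rho (lf i)))).
Proof.
move=> d_gt0 d_dvd w_prim P_neq0 P_size b_fourier k rho.
have explicit_form := gcm_explicit_form d_gt0 d_dvd w_prim P_size b_fourier.
split; last by case=> P0 _ S_disj _; exact: explicit_form.
split=> [[f [a [r [r_range f_eq]]] [_ P_f]] | [P0 _ S_disj S_cover]].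
  apply: (gcm_criterion d_gt0 d_dvd w_prim P_size b_fourier r_range) P_neq0.
  by move=> x; rewrite P_f f_eq.
have [lf lf_S] : exists lf : 'I_d -> 'I_k, forall i, i \in Sset k b (lf i).
  apply: (@fin_all_exists _ (fun=> 'I_k) (fun i l => i \in Sset k b l)) => i.
  have : i \in \bigcup_(l < k) Sset k b l by rewrite S_cover inE.
  by case/bigcupP=> l _ i_Sl; exists l.
exists (gcm_map w (fun i => b (lf i) i) (fun i => rho (lf i))).
  by exists (fun i => b (lf i) i), (fun i => rho (lf i)); split=> // i; exact: rho_range.
by apply: explicit_form => // i; split.
Qed.
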